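(* Fix real numbers $\alpha>0$, $\gamma>0$, $\xi>0$, $\sigma>0$. For $(h,k,p,q)\in\mathbb{R}\times(0,2)\times\mathbb{R}\times\mathbb{R}$ define \[ \sigma_B^2=\frac{h^2}{1-(1-k)^2}\,\sigma^2,\qquad \sigma_F^2=\frac{1}{\alpha^2}\Big[(1-h-p)^2+\frac{h^2(k-q)^2}{1-(1-k)^2}\Big]\sigma^2,\qquad \sigma_W^2=\Big[p^2+\frac{h^2q^2}{1-(1-k)^2}\Big]\sigma^2, \] and $\mathcal{L}(h,k,p,q)=\sigma_W^2+\xi\,\sigma_B^2+\gamma\,\sigma_F^2$. Let \[ \beta=\frac{\gamma}{\xi(\gamma+\alpha^2)}. \] Then $\mathcal{L}$ attains its minimum over $\mathbb{R}\times(0,2)\times\mathbb{R}\times\mathbb{R}$ uniquely at \[ p=q=\xi\,\frac{\sqrt{4\beta+1}-1}{2},\qquad h=\frac{2\beta+1-\sqrt{4\beta+1}}{2\beta},\qquad k=\frac{\sqrt{4\beta+1}-1}{2\beta}. \]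
   Context: Interpretation (not needed for the claim): in a transitive network, after diagonalizing the graph Laplacian, each nonzero singular value $\alpha=\alpha(\theta)$ of the incidence operator gives a scalar mode with i.i.d. zero-mean noise $z(t)$ of variance $\sigma^2$ and linear control $b(t)=(1-k)b(t-1)+h z(t)$ (storage deviation), $f(t)=-\alpha^{-1}\{(1-h-p)z(t)+(k-q)b(t-1)\}$ (flow), $w(t)=p z(t)+q b(t-1)$ (fast generation); $\sigma_B^2,\sigma_F^2,\sigma_W^2$ are the stationary variances of $b,f,w$, and $\gamma,\xi$ are Lagrange weights penalizing flow and storage variance. *)

From Stdlib Require Import Reals Lra Psatz.
Open Scope R_scope.

Definition sigB2 (sigma h k : R) : R :=
  h ^ 2 / (1 - (1 - k) ^ 2) * sigma ^ 2.

Definition sigF2 (alpha sigma h k p q : R) : R :=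
  / alpha ^ 2 * ((1 - h - p) ^ 2 + h ^ 2 * (k - q) ^ 2 / (1 - (1 - k) ^ 2)) * sigma ^ 2.

Definition sigW2 (sigma h k p q : R) : R :=
  (p ^ 2 + h ^ 2 * q ^ 2 / (1 - (1 - k) ^ 2)) * sigma ^ 2.

Definition Lag (alpha gamma xi sigma h k p q : R) : R :=
  sigW2 sigma h k p q + xi * sigB2 sigma h k + gamma * sigF2 alpha sigma h k p q.

Definition beta (alpha gamma xi : R) : R := gamma / (xi * (gamma + alpha ^ 2)).

Definition p_opt (alpha gamma xi : R) : R :=
  xi * ((sqrt (4 * beta alpha gamma xi + 1) - 1) / 2).
Definition h_opt (alpha gamma xi : R) : R :=
  (2 * beta alpha gamma xi + 1 - sqrt (4 * beta alpha gamma xi + 1))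
  / (2 * beta alpha gamma xi).
Definition k_opt (alpha gamma xi : R) : R :=
  (sqrt (4 * beta alpha gamma xi + 1) - 1) / (2 * beta alpha gamma xi).

(* Put t := gamma / (gamma + alpha^2), so that gamma / alpha^2 = t / (1 - t), and let
   kappa := k_opt be the positive root of  beta kappa^2 + kappa = 1.  Since
   beta = t / xi, the data (gamma, xi) are recovered from (t, kappa) as
   gamma = alpha^2 t / (1 - t) and xi = t kappa^2 / (1 - kappa), and the claimed
   optimiser reads  h = 1 - kappa,  k = kappa,  p = q = t kappa.

   The proof is a completion of squares: for 0 < k < 2,
     L / sigma^2 = t kappa + excess,
   where [excess] is a sum of four nonnegative weighted squares measuring the
   distance of p, q, k, h to their optimal values ([Lag_sum_of_squares]). *)

From Stdlib Require Import Reals Lra Psatz.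
Open Scope R_scope.

Lemma wsq_nonneg (w x : R) : 0 <= w -> 0 <= w * x ^ 2.
Proof. intro Hw. apply Rmult_le_pos; [exact Hw | apply pow2_ge_0]. Qed.

Lemma wsq_pos (w x : R) : 0 < w -> x <> 0 -> 0 < w * x ^ 2.
Proof. intros Hw Hx. apply Rmult_lt_0_compat; [exact Hw | nra]. Qed.

Lemma positive_root (b : R) : 0 < b ->
  let kappa := (sqrt (4 * b + 1) - 1) / (2 * b) in
  b * kappa ^ 2 + kappa = 1 /\ 0 < kappa < 1.
Proof.
  intros Hb kappa.
  assert (Hsq : sqrt (4 * b + 1) ^ 2 = 4 * b + 1) by (rewrite pow2_sqrt; lra).
  assert (Hs1 : 1 < sqrt (4 * b + 1)).
  { rewrite <- sqrt_1 at 1. apply sqrt_lt_1; lra. }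
  assert (Hroot : b * kappa ^ 2 + kappa = 1).
  { unfold kappa. set (s := sqrt (4 * b + 1)) in *.
    replace (b * ((s - 1) / (2 * b)) ^ 2 + (s - 1) / (2 * b))
      with ((s ^ 2 - 1) / (4 * b)) by (field; lra).
    rewrite Hsq. field. lra. }
  assert (Hpos : 0 < kappa) by (unfold kappa; apply Rdiv_lt_0_compat; lra).
  assert (0 < b * kappa ^ 2) by (apply Rmult_lt_0_compat; [lra | nra]).
  split; [exact Hroot | split; [exact Hpos | lra]].
Qed.

Definition excess (t kappa h k p q : R) : R :=
  / (1 - t) * (p - t * (1 - h)) ^ 2
  + h ^ 2 / ((1 - t) * (1 - (1 - k) ^ 2)) * (q - t * k) ^ 2
  + t * h ^ 2 / ((1 - kappa) * (1 - (1 - k) ^ 2)) * (k - kappa) ^ 2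
  + t / (1 - kappa) * (h - (1 - kappa)) ^ 2.

Lemma Lag_sum_of_squares (alpha gamma xi sigma t kappa h k p q : R) :
  alpha <> 0 -> 0 < t < 1 -> 0 < kappa < 1 -> 0 < k < 2 ->
  gamma = alpha ^ 2 * t / (1 - t) -> xi = t * kappa ^ 2 / (1 - kappa) ->
  Lag alpha gamma xi sigma h k p q = sigma ^ 2 * (t * kappa + excess t kappa h k p q).
Proof.
  intros Ha Ht Hkappa Hk -> ->.
  assert (HD : 1 - (1 - k) ^ 2 <> 0) by nra.
  unfold Lag, sigW2, sigB2, sigF2, excess.
  field; repeat split; lra.
Qed.

Lemma excess_at_optimum (t kappa : R) :
  excess t kappa (1 - kappa) kappa (t * kappa) (t * kappa) = 0.
Proof.
  unfold excess.
  replace (1 - (1 - kappa)) with kappa by ring.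
  rewrite !Rminus_diag. ring.
Qed.

(* The excess is strictly positive away from the candidate optimiser: the last
   square pins down h, then the third pins down k (as h <> 0), then the first
   pins down p and finally the second pins down q. *)
Lemma excess_pos (t kappa h k p q : R) :
  0 < t < 1 -> 0 < kappa < 1 -> 0 < k < 2 ->
  (h, k, p, q) <> (1 - kappa, kappa, t * kappa, t * kappa) ->
  0 < excess t kappa h k p q.
Proof.
  intros Ht Hkappa Hk Hne.
  assert (HD : 0 < 1 - (1 - k) ^ 2) by nra.
  assert (W1 : 0 < / (1 - t)) by (apply Rinv_0_lt_compat; lra).
  assert (W2 : 0 <= h ^ 2 / ((1 - t) * (1 - (1 - k) ^ 2))).
  { apply Rmult_le_pos; [apply pow2_ge_0 | left; apply Rinv_0_lt_compat; nra]. }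
  assert (W3 : 0 <= t * h ^ 2 / ((1 - kappa) * (1 - (1 - k) ^ 2))).
  { apply Rmult_le_pos; [nra | left; apply Rinv_0_lt_compat; nra]. }
  assert (W4 : 0 < t / (1 - kappa)) by (apply Rdiv_lt_0_compat; lra).
  unfold excess.
  pose proof (wsq_nonneg _ (p - t * (1 - h)) (Rlt_le _ _ W1)) as N1.
  pose proof (wsq_nonneg _ (q - t * k) W2) as N2.
  pose proof (wsq_nonneg _ (k - kappa) W3) as N3.
  pose proof (wsq_nonneg _ (h - (1 - kappa)) (Rlt_le _ _ W4)) as N4.
  destruct (Req_dec h (1 - kappa)) as [-> | Hh];
    [| pose proof (wsq_pos _ _ W4 (Rminus_eq_contra _ _ Hh)); lra].
  destruct (Req_dec k kappa) as [-> | Hk'].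
  2: { assert (W3' : 0 < t * (1 - kappa) ^ 2 / ((1 - kappa) * (1 - (1 - k) ^ 2)))
         by (apply Rdiv_lt_0_compat; apply Rmult_lt_0_compat; try apply pow_lt; lra).
       pose proof (wsq_pos _ _ W3' (Rminus_eq_contra _ _ Hk')); lra. }
  replace (1 - (1 - kappa)) with kappa in * by ring.
  destruct (Req_dec p (t * kappa)) as [-> | Hp];
    [| pose proof (wsq_pos _ _ W1 (Rminus_eq_contra _ _ Hp)); lra].
  destruct (Req_dec q (t * kappa)) as [-> | Hq]; [congruence |].
  assert (W2' : 0 < (1 - kappa) ^ 2 / ((1 - t) * (1 - (1 - kappa) ^ 2)))
    by (apply Rdiv_lt_0_compat; [apply pow_lt | apply Rmult_lt_0_compat]; lra).
  pose proof (wsq_pos _ _ W2' (Rminus_eq_contra _ _ Hq)); lra.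
Qed.

Lemma optimum_parametrisation (alpha gamma xi : R) :
  0 < alpha -> 0 < gamma -> 0 < xi ->
  let t := gamma / (gamma + alpha ^ 2) in
  let kappa := k_opt alpha gamma xi in
  0 < t < 1 /\ 0 < kappa < 1 /\
  gamma = alpha ^ 2 * t / (1 - t) /\ xi = t * kappa ^ 2 / (1 - kappa) /\
  h_opt alpha gamma xi = 1 - kappa /\ p_opt alpha gamma xi = t * kappa.
Proof.
  intros Halpha Hgamma Hxi t kappa.
  assert (Ha2 : 0 < alpha ^ 2) by nra.
  assert (Hbpos : 0 < beta alpha gamma xi).
  { unfold beta. apply Rdiv_lt_0_compat; nra. }
  assert (Ht_beta : t = beta alpha gamma xi * xi) by (unfold beta, t; field; lra).
  destruct (positive_root _ Hbpos) as [Hroot Hkappa].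
  fold (k_opt alpha gamma xi) kappa in Hroot, Hkappa.
  set (b := beta alpha gamma xi) in *.
  assert (Ht : 0 < t < 1).
  { unfold t. split; [apply Rdiv_lt_0_compat; lra |].
    apply Rmult_lt_reg_r with (gamma + alpha ^ 2); [lra |].
    field_simplify; lra. }
  repeat split; try lra.
  - unfold t. field. lra.
  - rewrite Ht_beta.
    replace (b * xi * kappa ^ 2) with (xi * (b * kappa ^ 2)) by ring.
    replace (b * kappa ^ 2) with (1 - kappa) by lra.
    field. lra.
  - unfold h_opt, kappa, k_opt. fold b. field. lra.
  - unfold p_opt, kappa, k_opt. fold b. rewrite Ht_beta. field. lra.
Qed.

Theorem mainTheorem1 (alpha gamma xi sigma : R)
  (Halpha : 0 < alpha) (Hgamma : 0 < gamma) (Hxi : 0 < xi) (Hsigma : 0 < sigma) :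
  (0 < k_opt alpha gamma xi < 2) /\
  (forall h k p q : R, 0 < k < 2 ->
     (h, k, p, q) <> (h_opt alpha gamma xi, k_opt alpha gamma xi,
                      p_opt alpha gamma xi, p_opt alpha gamma xi) ->
     Lag alpha gamma xi sigma (h_opt alpha gamma xi) (k_opt alpha gamma xi)
         (p_opt alpha gamma xi) (p_opt alpha gamma xi)
     < Lag alpha gamma xi sigma h k p q).
Proof.
  destruct (optimum_parametrisation alpha gamma xi Halpha Hgamma Hxi)
    as (Ht & Hkappa & Hgam & Hxi' & -> & ->).
  set (t := gamma / (gamma + alpha ^ 2)) in *.
  set (kappa := k_opt alpha gamma xi) in *.
  split; [lra |].
  intros h k p q Hk Hne.
  rewrite (Lag_sum_of_squares alpha gamma xi sigma t kappa) by lra.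
  rewrite (Lag_sum_of_squares alpha gamma xi sigma t kappa h) by lra.
  rewrite excess_at_optimum.
  apply Rmult_lt_compat_l; [nra |].
  pose proof (excess_pos t kappa h k p q Ht Hkappa Hk Hne); lra.
Qed.
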